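(* Let $X=\prod_{i=1}^n X_i$ be a finite set and $\langle\mathcal A,\mathcal U\rangle$ a linear twofold partition of $X$ (satisfying the standing assumptions). Then $\langle\mathcal A,\mathcal U\rangle$ has a representation in Model $F^{\underline u}$ if and only if $\mathcal A_*$ is a maximal antichain of the poset $(X,\succsim)$.
   Context: Setting. $N=\{1,\dots,n\}$, $n\ge2$. $(y_i,x_{-i})$ denotes $x$ with $i$-th coordinate replaced by $y_i$; $a_{-i}$ ranges over $\prod_{j\ne i}X_j$. A twofold partition $\langle\mathcal A,\mathcal U\rangle$ of $X$: disjoint sets with union $X$. Define $x_i\succsim_i y_i$ iff [for all $a_{-i}$, $(y_i,a_{-i})\in\mathcal A\Rightarrow(x_i,a_{-i})\in\mathcal A$]. Standing assumptions: every attribute is influential (exist $x_i,y_i,a_{-i}$ with $(x_i,a_{-i})\in\mathcal A$, $(y_i,a_{-i})\in\mathcal U$) and each $\succsim_i$ is antisymmetric. Linear: for all $i$, $x_i,y_i$, $a_{-i},b_{-i}$, if $(x_i,a_{-i})\in\mathcal A$ and $(y_i,b_{-i})\in\mathcal A$ then $(y_i,a_{-i})\in\mathcal A$ or $(x_i,b_{-i})\in\mathcal A$ (equivalently, each $\succsim_i$ is complete, hence a linear order here). $x\succsim y$ iff $x_i\succsim_i y_i$ for all $i$ (a partial order on $X$), with asymmetric part $\succ$. $\mathcal A_*$ is the set of minimal elements of $\mathcal A$ for $\succsim$. An antichain is a set of pairwise $\succsim$-incomparable elements; it is maximal if no element of $X$ can be added to it keeping it an antichain. Model $F^{u}$: there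 are semiorders $S_i$ on $X_i$ (reflexive, Ferrers: $xS_iy, zS_iw\Rightarrow xS_iw$ or $zS_iy$; semitransitive: $xS_iy, yS_iz\Rightarrow xS_iw$ or $wS_iz$), the relation $S$ on $X$ given by $xSy$ iff $x_iS_iy_i$ for all $i\in N$ with asymmetric part $P$, and a set $\mathcal P\subseteq X$ with no $p,q\in\mathcal P$ satisfying $pPq$, such that for all $x$: $x\in\mathcal U$ iff [$pPx$ for some $p\in\mathcal P$ and not $xPq$ for all $q\in\mathcal P$]. Model $F^{\underline u}$: Model $F^{u}$ with a representation in which $S_i=\succsim_i$ for all $i$ (so $S=\succsim$, $P=\succ$). *)

From mathcomp Require Import all_boot.
Unset Printing Implicit Defensive.

Section Defs.
Variables (n : nat) (T : 'I_n -> finType).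

Definition prodX := {dffun forall i : 'I_n, T i}.

(* (y_i, x_{-i}) : x with its i-th coordinate replaced by y. *)
Definition upd (x : prodX) (i : 'I_n) (y : T i) : prodX :=
  [ffun j => match i =P j with
             | ReflectT e => ecast k (T k) e y
             | ReflectF _ => x j end].

(* The twofold partition <A, U> is given by A; U is its complement in X. *)
Variable A : prodX -> bool.
Definition inU (x : prodX) : Prop := ~~ A x.

(* x_i >=_i y_i : for all a_{-i}, (y_i,a_{-i}) in A => (x_i,a_{-i}) in A.
   a_{-i} is represented by a full profile a whose i-th coordinate is overridden. *)
Definition pref (i : 'I_n) (xi yi : T i) : Prop :=
  forall a : prodX, A (upd a i yi) -> A (upd a i xi).

Definition influential (i : 'I_n) : Prop :=
  exists (xi yi : T i) (a : prodX), A (upd a i xi) /\ inU (upd a i yi).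

Definition pref_antisym (i : 'I_n) : Prop :=
  forall xi yi : T i, pref i xi yi -> pref i yi xi -> xi = yi.

Definition linear_partition : Prop :=
  forall (i : 'I_n) (xi yi : T i) (a b : prodX),
    A (upd a i xi) -> A (upd b i yi) -> A (upd a i yi) \/ A (upd b i xi).

Definition dom (x y : prodX) : Prop := forall i, pref i (x i) (y i).
Definition sdom (x y : prodX) : Prop := dom x y /\ ~ dom y x.

Definition Amin (x : prodX) : Prop := A x /\ ~ (exists y, A y /\ sdom x y).

Definition antichain (S : prodX -> Prop) : Prop :=
  forall x y, S x -> S y -> (dom x y \/ dom y x) -> x = y.

Definition maximal_antichain (S : prodX -> Prop) : Prop :=
  antichain S /\
  forall z : prodX, antichain (fun x => S x \/ x = z) -> S z.

Definition semiorder (U : Type) (R : U -> U -> Prop) : Prop :=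
  (forall x, R x x) /\
  (forall x y z w, R x y -> R z w -> R x w \/ R z y) /\
  (forall x y z w, R x y -> R y z -> R x w \/ R w z).

Definition prodS (S : forall i, T i -> T i -> Prop) (x y : prodX) : Prop :=
  forall i, S i (x i) (y i).
Definition prodP (S : forall i, T i -> T i -> Prop) (x y : prodX) : Prop :=
  prodS S x y /\ ~ prodS S y x.

Definition represents (S : forall i, T i -> T i -> Prop) (Pset : prodX -> Prop) : Prop :=
  (forall p q, Pset p -> Pset q -> ~ prodP S p q) /\
  (forall x, inU x <->
     ((exists p, Pset p /\ prodP S p x) /\ (forall q, Pset q -> ~ prodP S x q))).

Definition model_Fu : Prop :=
  exists (S : forall i, T i -> T i -> Prop) (Pset : prodX -> Prop),
    (forall i, semiorder _ (S i)) /\ represents S Pset.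

Definition model_Fu_under : Prop :=
  exists (S : forall i, T i -> T i -> Prop) (Pset : prodX -> Prop),
    (forall i, semiorder _ (S i)) /\ (forall i, S i = @pref i) /\ represents S Pset.

End Defs.

Arguments upd {n T}.
Arguments inU {n T}.
Arguments pref {n T}.
Arguments influential {n T}.
Arguments pref_antisym {n T}.
Arguments linear_partition {n T}.
Arguments dom {n T}.
Arguments sdom {n T}.
Arguments Amin {n T}.
Arguments antichain {n T}.
Arguments maximal_antichain {n T}.
Arguments semiorder {U}.
Arguments prodS {n T}.
Arguments prodP {n T}.
Arguments represents {n T}.
Arguments model_Fu {n T}.
Arguments model_Fu_under {n T}.

From mathcomp Require Import all_boot.
From Stdlib Require Import Classical FunctionalExtensionality.
Set Implicit Arguments.
Unset Strict Implicit.

(* The dominance relation is the product of the orders [pref A i], and [A] is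
   an up-set for it (raise one coordinate at a time).  By linearity each
   [pref A i] is a complete preorder, hence a semiorder.  If a set [P]
   represents the partition with [S_i = pref A i], then [P] consists of minimal
   elements of [A] and every point of [U] lies strictly below a point of [P];
   so every point outside [A_*] is comparable to [A_*], which is maximality.
   Conversely, if [A_*] is a maximal antichain, a point of [U] lies strictly
   below some point of [A_*] (otherwise it could be added to [A_*]) and above
   none (since [A] is an up-set), so [P := A_*] is a representation. *)

Lemma total_preorder_semiorder (U : Type) (R : U -> U -> Prop) :
  (forall x, R x x) -> (forall x y z, R x y -> R y z -> R x z) ->
  (forall x y, R x y \/ R y x) -> semiorder R.
Proof.
move=> R_refl R_trans R_total; split=> //; split.
- move=> x y z w Rxy Rzw; have [|Rwx] := R_total x w; [by left | right].
  exact: R_trans _ _ _ (R_trans _ _ _ Rzw Rwx) Rxy.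
- move=> x y z w Rxy Ryz; have [|Rwx] := R_total x w; [by left | right].
  exact: R_trans _ _ _ (R_trans _ _ _ Rwx Rxy) Ryz.
Qed.

Section Updates.
Variables (n : nat) (T : 'I_n -> finType).

Lemma upd_same (a : prodX n T) i v : upd a i v i = v.
Proof. by rewrite ffunE; case: eqP => // e; rewrite (eq_axiomK e). Qed.

Lemma upd_other (a : prodX n T) i v j : i != j -> upd a i v j = a j.
Proof. by rewrite ffunE; case: eqP => // ->; rewrite eqxx. Qed.

Lemma upd_id (a : prodX n T) i : upd a i (a i) = a.
Proof.
apply/ffunP => j; have [<-|ne] := eqVneq i j; first exact: upd_same.
exact: upd_other.
Qed.

Definition mix (x y : prodX n T) (k : nat) : prodX n T :=
  [ffun j : 'I_n => if j < k then x j else y j].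

Lemma mix0 x y : mix x y 0 = y.
Proof. by apply/ffunP => j; rewrite ffunE. Qed.

Lemma mixn x y : mix x y n = x.
Proof. by apply/ffunP => j; rewrite ffunE ltn_ord. Qed.

Lemma mixS x y k (lt_kn : k < n) :
  let i := Ordinal lt_kn in mix x y k.+1 = upd (mix x y k) i (x i).
Proof.
move=> i; apply/ffunP => j; have [<-|ne] := eqVneq i j.
  by rewrite upd_same ffunE ltnSn.
rewrite upd_other // !ffunE ltnS leq_eqVlt.
suff /negbTE-> : nat_of_ord j != k by [].
by apply: contra_neq ne => e; apply: val_inj.
Qed.

End Updates.

Section Dominance.
Variables (n : nat) (T : 'I_n -> finType) (A : prodX n T -> bool).

Lemma dom_refl x : dom A x x.
Proof. by move=> i a. Qed.

Lemma dom_trans x y z : dom A x y -> dom A y z -> dom A x z.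
Proof. by move=> dxy dyz i a Aa; apply/dxy/dyz. Qed.

Lemma sdom_trans x y z : sdom A x y -> sdom A y z -> sdom A x z.
Proof.
move=> [dxy ndyx] [dyz _]; split; first exact: dom_trans dxy dyz.
by move=> dzx; apply: ndyx; apply: dom_trans dyz dzx.
Qed.

Lemma dom_upset x y : dom A x y -> A y -> A x.
Proof.
move=> dxy Ay; rewrite -(mixn x y).
suff: forall k, k <= n -> A (mix x y k) by apply.
elim=> [|k IH] le_kn; first by rewrite mix0.
rewrite (mixS x y le_kn); apply: dxy.
have -> : y (Ordinal le_kn) = mix x y k (Ordinal le_kn) by rewrite ffunE ltnn.
by rewrite upd_id IH // ltnW.
Qed.

Definition domb (x y : prodX n T) : bool :=
  [forall i, [forall a, A (upd a i (y i)) ==> A (upd a i (x i))]].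

Lemma domP x y : reflect (dom A x y) (domb x y).
Proof.
apply: (iffP forallP) => dxy i.
  by move=> a; move/forallP/(_ a)/implyP: (dxy i).
by apply/forallP => a; apply/implyP/dxy.
Qed.

Lemma card_dom_sdom x y :
  sdom A x y -> #|[pred z | domb y z]| < #|[pred z | domb x z]|.
Proof.
move=> [dxy ndyx]; apply/proper_card/properP; split.
  by apply/subsetP => z /domP dyz; apply/domP/(dom_trans dxy).
by exists x; [apply/domP/dom_refl | apply/domP].
Qed.

Lemma exists_Amin_below x : A x -> exists2 m, Amin A m & dom A x m.
Proof.
have [k] := ubnP #|[pred z | domb x z]|; elim: k x => // k IH x /ltnSE le_xk Ax.
have [minx | nminx] := classic (Amin A x); first by exists x => //; apply: dom_refl.
have [y [Ay sxy]] : exists y, A y /\ sdom A x y by apply: NNPP => nxy; apply: nminx.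
have [|m minm dym] := IH y _ Ay; first exact: leq_trans (card_dom_sdom sxy) le_xk.
by exists m => //; apply: dom_trans (proj1 sxy) dym.
Qed.

Lemma antichain_add (S : prodX n T -> Prop) z :
  antichain A S -> (forall x, S x -> dom A x z \/ dom A z x -> x = z) ->
  antichain A (fun x => S x \/ x = z).
Proof.
move=> acS Sz x y [Sx|->] [Sy|->] cmp; first exact: acS.
- exact: Sz.
- by symmetry; apply: Sz => //; case: cmp; [right | left].
- by [].
Qed.

Hypothesis pref_antisymA : forall i, pref_antisym A i.

Lemma dom_anti x y : dom A x y -> dom A y x -> x = y.
Proof. by move=> dxy dyx; apply/ffunP => i; apply: pref_antisymA. Qed.

Lemma dom_neq_sdom x y : dom A x y -> x <> y -> sdom A x y.
Proof. by move=> dxy nxy; split=> // dyx; apply/nxy/dom_anti. Qed.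

Lemma Amin_antichain : antichain A (Amin A).
Proof.
move=> x y [Ax minx] [Ay miny] cmp; apply: NNPP => nxy.
case: cmp => [dxy | dyx]; [apply: minx; exists y | apply: miny; exists x].
  by split=> //; apply: dom_neq_sdom.
by split=> //; apply: dom_neq_sdom => // /esym.
Qed.

Section Representation.
Variable P : prodX n T -> Prop.
Hypothesis repP : represents A (fun i => pref A i) P.

Lemma represents_sub_A p : P p -> A p.
Proof.
move=> Pp; apply: NNPP => nAp.
have [[q [Pq sqp]] _] := proj1 (repP.2 p) (introN idP nAp).
exact: repP.1 q p Pq Pp sqp.
Qed.

Lemma represents_sub_Amin p : P p -> Amin A p.
Proof.
move=> Pp; split; first exact: represents_sub_A.
move=> [y [Ay spy]].
suff [q Pq syq] : exists2 q, P q & sdom A y q.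
  exact: repP.1 p q Pp Pq (sdom_trans spy syq).
apply: NNPP => nyq; suff : inU A y by rewrite /inU Ay.
by apply/(repP.2 y); split=> [|q Pq syq]; [exists p | apply: nyq; exists q].
Qed.

Lemma represents_maximal_antichain : maximal_antichain A (Amin A).
Proof.
split=> [|z acz]; first exact: Amin_antichain.
have [Az | nAz] := boolP (A z).
  have [m minm dzm] := exists_Amin_below Az.
  by rewrite (acz z m (or_intror erefl) (or_introl minm) (or_introl dzm)).
have [[p [Pp spz]] _] := proj1 (repP.2 z) nAz.
have minp := represents_sub_Amin Pp.
have pz := acz p z (or_introl minp) (or_intror erefl) (or_introl spz.1).
by move: nAz; rewrite -pz represents_sub_A.
Qed.

End Representation.

Lemma maximal_antichain_represents :
  maximal_antichain A (Amin A) -> represents A (fun i => pref A i) (Amin A).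
Proof.
move=> [_ maxA]; split=> [p q [_ minp] [Aq _] spq|x]; first by apply: minp; exists q.
split=> [Ux | [[p [[_ minp] spx]] _]].
  have nAx : ~ A x by apply/negP.
  split=> [|q [Aq _] [dxq _]]; last exact/nAx/(dom_upset dxq).
  apply: NNPP => nspx; apply/nAx/(proj1 (maxA x _)).
  apply: antichain_add Amin_antichain _ => m minm [dmx | dxm].
    by apply: NNPP => nmx; apply: nspx; exists m; split=> //; apply: dom_neq_sdom.
  by case: nAx; apply: dom_upset dxm minm.1.
by apply/negP => Ax; apply: minp; exists x.
Qed.

End Dominance.

Section Linearity.
Variables (n : nat) (T : 'I_n -> finType) (A : prodX n T -> bool).
Hypothesis linA : linear_partition A.

Lemma pref_total i x y : pref A i x y \/ pref A i y x.
Proof.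
case: (classic (pref A i x y)) => [pxy | nxy]; [by left | right].
have [a nyx] := not_all_ex_not _ _ nxy.
have Ay : A (upd a i y) by apply: NNPP => nAy; apply: nyx => /nAy.
by move=> b Abx; case: (linA Ay Abx) => // Ax; case: nyx.
Qed.

Lemma pref_semiorder i : semiorder (pref A i).
Proof.
apply: total_preorder_semiorder; last exact: pref_total.
  by move=> x a.
by move=> x y z pxy pyz a Aa; apply/pxy/pyz.
Qed.

End Linearity.

(* The hypotheses [2 <= n] and [influential A i] are standing assumptions of the
   model that this equivalence does not use. *)
Theorem theorem2 (n : nat) (T : 'I_n -> finType) (A : prodX n T -> bool) :
  2 <= n ->
  (forall i, influential A i) ->
  (forall i, pref_antisym A i) ->
  linear_partition A ->
  (model_Fu_under A <-> maximal_antichain A (Amin A)).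
Proof.
move=> _ _ antiA linA; split.
  move=> [S [P [_ [S_pref repP]]]].
  have ES : S = (fun i => pref A i) by apply: functional_extensionality_dep.
  by rewrite ES in repP; apply: represents_maximal_antichain repP.
move=> maxA; exists (fun i => pref A i), (Amin A).
split; first exact: pref_semiorder.
by split=> //; apply: maximal_antichain_represents.
Qed.
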